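(* Let $\alpha=a_1\cdots a_n\neq (k-1)^n$ be a bracelet over $\{0,\dots,k-1\}$ and let $j$ be the index of the last symbol of $\alpha$ different from $k-1$. Then $\mathrm{LastNonMax}(\alpha)=a_1\cdots a_{j-1}(a_j+1)(k-1)^{n-j}$ is a bracelet.
   Context: Let $\Sigma=\{0,1,\dots,k-1\}$, $k\ge 2$. Strings are compared lexicographically ($\alpha<\beta$ if $\alpha$ is a proper prefix of $\beta$, or $\alpha$ has the smaller symbol at the first index where they differ). For $\alpha=a_1\cdots a_n$, $\alpha^R=a_n\cdots a_1$; $[\alpha]$ is the set of rotations of $\alpha$. $\alpha$ is a bracelet if it is the lexicographically smallest element of $[\alpha]\cup[\alpha^R]$. *)

From mathcomp Require Import all_boot.
Set Implicit Arguments. Unset Strict Implicit. Unset Printing Implicit Defensive.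

Definition is_string (k : nat) (s : seq nat) : bool := all (fun a => a < k) s.

Fixpoint lex_lt (s t : seq nat) : bool :=
  match s, t with
  | [::], [::] => false
  | [::], _ :: _ => true
  | _ :: _, [::] => false
  | a :: s', b :: t' => (a < b) || ((a == b) && lex_lt s' t')
  end.
Definition lex_le (s t : seq nat) : bool := (s == t) || lex_lt s t.

Definition bracelet (s : seq nat) : Prop :=
  forall i, i < size s -> lex_le s (rot i s) /\ lex_le s (rot i (rev s)).

(* index (1-based, as in the paper) of the last symbol different from k-1;
   here computed 0-based: j0 = j - 1. *)
Definition last_nonmax_index (k : nat) (s : seq nat) : nat :=
  size s - (find (fun a => a != k.-1) (rev s)).+1.

Definition LastNonMax (k : nat) (s : seq nat) : seq nat :=
  let j0 := last_nonmax_index k s in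
  take j0 s ++ (nth 0 s j0).+1 :: nseq (size s - j0.+1) k.-1.

From mathcomp Require Import all_boot zify.
Set Implicit Arguments. Unset Strict Implicit. Unset Printing Implicit Defensive.

(* Write alpha = p a m^t with a < m = k-1, so that LastNonMax alpha is
   beta = p (a+1) m^t, i.e. alpha incremented at position |p|.  A rotation of
   beta by 0 < i <= |p| compares the prefix of beta of length n-i with its
   suffix from i; alpha's version of this comparison holds, and the increment
   lands earlier in the suffix than in the prefix, so beta wins strictly.
   Rotations starting in the block m^t begin with m, which beats the first
   symbol of beta (first symbol of p <= a by the rotation of alpha starting at
   a) unless beta = m^n.  For rev beta = m^t (a+1) rev p the same head argument
   handles the rotations starting in m^t or at a+1, and a rotation starting
   inside rev p, with p = u w, reads rev u m^t (a+1) rev w: either u < rev u,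
   or u = rev u and one compares w (a+1) m^t with m^t (a+1) rev w, which
   follows from the corresponding comparison for alpha. *)

Lemma lex_le_refl s : lex_le s s.
Proof. by rewrite /lex_le eqxx. Qed.

Lemma lex_ltW s t : lex_lt s t -> lex_le s t.
Proof. by rewrite /lex_le => ->; rewrite orbT. Qed.

Lemma lex_le_consE x y s t :
  lex_le (x :: s) (y :: t) = (x < y) || (x == y) && lex_le s t.
Proof. by rewrite /lex_le /= eqseq_cons; case: ltngtP => //= ->; rewrite orbF. Qed.

Lemma lex_lt_head s x r : 0 < size s -> nth 0 s 0 < x -> lex_lt s (x :: r).
Proof. by case: s => //= y s _ ->. Qed.

Lemma lex_lt_cat u v X Y : size u = size v ->
  lex_lt (u ++ X) (v ++ Y) = lex_lt u v || (u == v) && lex_lt X Y.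
Proof.
elim: u v => [|x u IH] [|y v] //= [size_uv].
rewrite IH // eqseq_cons.
by case: (x < y); case: (x == y); case: (lex_lt u v); case: (u == v).
Qed.

Lemma lex_le_cat u v X Y : size u = size v ->
  lex_le (u ++ X) (v ++ Y) = lex_lt u v || (u == v) && lex_le X Y.
Proof.
move=> size_uv; rewrite /lex_le lex_lt_cat // eqseq_cat //.
by case: (u == v); case: (X == Y); case: (lex_lt u v); case: (lex_lt X Y).
Qed.

Lemma lex_le_catl u v X Y : size u = size v ->
  lex_le (u ++ X) (v ++ Y) -> lex_le u v.
Proof.
move=> size_uv; rewrite lex_le_cat // => /orP[/lex_ltW //|/andP[/eqP-> _]].
exact: lex_le_refl.
Qed.

Lemma lex_le_nseq m w : all (fun x => x <= m) w -> lex_le w (nseq (size w) m).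
Proof.
elim: w => [|x w IH] /=; first by rewrite lex_le_refl.
by case/andP=> x_le /IH w_le; rewrite lex_le_consE w_le andbT orbC -leq_eqVlt.
Qed.

Lemma lex_lt_incr_nth_lt u v i i' : size v = size u -> lex_le v u ->
  i < size u -> i < i' -> lex_lt (incr_nth v i') (incr_nth u i).
Proof.
elim: u v i i' => [|x u IH] [|y v] i [|i'] //= [size_uv].
rewrite lex_le_consE => /orP[lt_yx|/andP[/eqP-> v_le]] lt_iu lt_ii'.
  by case: i {lt_iu lt_ii'} => [|i] /=; rewrite ?ltnS ?lt_yx ?(ltnW lt_yx).
by case: i lt_iu lt_ii' => [|i] /= lt_iu lt_ii'; rewrite ?ltnSn // ltnn eqxx IH.
Qed.

Lemma lex_lt_incr_nth_r u v i : size v = size u -> lex_le v u ->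
  i < size u -> lex_lt v (incr_nth u i).
Proof.
elim: u v i => [|x u IH] [|y v] i //= [size_uv].
rewrite lex_le_consE => /orP[lt_yx|/andP[/eqP-> v_le]] lt_iu.
  by case: i {lt_iu} => [|i] /=; rewrite ?ltnS ?lt_yx ?(ltnW lt_yx).
by case: i lt_iu => [|i] /= lt_iu; rewrite ?ltnSn // ltnn eqxx IH.
Qed.

Lemma lex_le_incr_nth u v i : size v = size u -> lex_le v u ->
  i < size u -> lex_le (incr_nth v i) (incr_nth u i).
Proof.
elim: u v i => [|x u IH] [|y v] i //= [size_uv].
rewrite lex_le_consE => /orP[lt_yx|/andP[/eqP-> v_le]] lt_iu.
  by case: i {lt_iu} => [|i] /=; rewrite lex_le_consE ?ltnS ?lt_yx.
by case: i lt_iu => [|i] /= lt_iu; rewrite lex_le_consE eqxx ltnn ?v_le ?IH.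
Qed.

Lemma incr_nth_cat s x r : incr_nth (s ++ x :: r) (size s) = s ++ x.+1 :: r.
Proof. by elim: s => //= y s ->. Qed.

Lemma take_incr_nth s n i : i < size s ->
  take n (incr_nth s i) = if i < n then incr_nth (take n s) i else take n s.
Proof.
elim: s n i => [|x s IH] [|n] [|i] //= lt_is.
by rewrite IH // ltnS; case: ifP.
Qed.

Lemma drop_incr_nth s n i : n <= i -> i < size s ->
  drop n (incr_nth s i) = incr_nth (drop n s) (i - n).
Proof.
elim: n s i => [|n IH] [|x s] [|i] //= le_ni lt_is; rewrite ?subn0 ?drop0 //.
by rewrite IH.
Qed.

(* Compare the prefix of length [size s - i] with the suffix starting at [i]:
   the increment hits the suffix at [j - i], before it hits the prefix (if at
   all) at [j]. *)
Lemma lex_lt_rot_incr_nth s i j : 0 < i <= j -> j < size s ->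
  lex_le s (rot i s) -> lex_lt (incr_nth s j) (rot i (incr_nth s j)).
Proof.
move=> /andP[i_gt0 le_ij] lt_js s_le.
set n := size s.
have size_incr : size (incr_nth s j) = n by rewrite size_incr_nth lt_js.
have size_halves r : size r = n -> size (take (n - i) r) = size (drop i r).
  by move=> size_r; rewrite size_take size_drop size_r; case: ifP; lia.
have halves_le : lex_le (take (n - i) s) (drop i s).
  apply: (@lex_le_catl _ _ (drop (n - i) s) (take i s)); first exact: size_halves.
  by rewrite cat_take_drop.
rewrite -{1}(cat_take_drop (n - i) (incr_nth s j)) /rot lex_lt_cat ?size_halves //.
rewrite drop_incr_nth ?take_incr_nth //.
have lt_jiu : j - i < size (drop i s) by rewrite size_drop; lia.
apply/orP; left; case: ifP => _;
  [apply: lex_lt_incr_nth_lt | apply: lex_lt_incr_nth_r]; rewrite ?size_halves //; lia.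
Qed.

Lemma lex_le_incr_pivot m w a t : all (fun x => x <= m) w -> a < m ->
  lex_le (w ++ a :: nseq t m) (nseq t m ++ a :: rev w) ->
  lex_le (w ++ a.+1 :: nseq t m) (nseq t m ++ a.+1 :: rev w).
Proof.
move=> w_le a_lt alpha_le.
have sizes : size (w ++ a :: nseq t m) = size (nseq t m ++ a :: rev w).
  by rewrite !size_cat /= size_nseq size_rev; lia.
have incr_l := incr_nth_cat w a (nseq t m).
have incr_r := incr_nth_cat (nseq t m) a (rev w); rewrite size_nseq in incr_r.
case: (ltngtP t (size w)) => [lt_tw | lt_wt | eq_tw].
- rewrite -incr_l -incr_r; apply/lex_ltW/lex_lt_incr_nth_lt => //.
  by rewrite size_cat /= size_nseq; lia.
- (* Here the comparison of [w] with the block [m^(size w)] already decides. *)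
  have split_t : nseq t m = nseq (size w) m ++ nseq (t - size w) m.
    by rewrite -nseqD subnKC // ltnW.
  rewrite [in X in lex_le _ X]split_t -catA lex_le_cat ?size_nseq //.
  have /orP[/eqP w_eq | ->] := lex_le_nseq w_le; last by [].
  apply/orP; right; rewrite {1}w_eq eqxx /=.
  case E: (t - size w) => [|e]; first by lia.
  rewrite w_eq rev_nseq /= lex_le_consE.
  move: a_lt; rewrite leq_eqVlt => /orP[/eqP <-|->] //.
  rewrite ltnn eqxx -[_ :: nseq _ _]/(nseq (size w).+1 _) -nseqD.
  have -> : e + (size w).+1 = t by lia.
  exact: lex_le_refl.
- rewrite -incr_l -incr_r -eq_tw; apply: lex_le_incr_nth => //.
  by rewrite size_cat /= size_nseq; lia.
Qed.

Lemma rot_nth (T : Type) (x0 : T) s i :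
  i < size s -> rot i s = nth x0 s i :: (drop i.+1 s ++ take i s).
Proof. by move=> lt_is; rewrite /rot (drop_nth x0 lt_is). Qed.

Lemma rev_cat_cons (T : Type) (u v : seq T) x : rev (u ++ x :: v) = rev v ++ x :: rev u.
Proof. by rewrite rev_cat rev_cons cat_rcons. Qed.

Lemma bracelet_nseq n x : bracelet (nseq n x).
Proof.
move=> i _; rewrite rev_nseq.
suff -> : rot i (nseq n x) = nseq n x by rewrite lex_le_refl.
case: (leqP n i) => [le_ni | lt_in]; first by rewrite rot_oversize // size_nseq.
by rewrite /rot drop_nseq take_nseq ?(ltnW lt_in) // -nseqD subnK // ltnW.
Qed.

Lemma rot_rev_cat_cons (T : Type) (q u w : seq T) x :
  rot ((size q).+1 + size w) (q ++ x :: rev (u ++ w)) = rev u ++ q ++ x :: rev w.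
Proof.
have -> : (size q).+1 + size w = size (q ++ x :: rev w).
  by rewrite size_cat /= size_rev addnS.
by rewrite rev_cat -cat_cons catA rot_size_cat.
Qed.

Section PivotIncrement.

Variables (m a t : nat) (p : seq nat).
Hypotheses (p_le_m : all (fun x => x <= m) p) (a_lt_m : a < m).
Hypothesis alpha_bracelet : bracelet (p ++ a :: nseq t m).

Local Notation alpha := (p ++ a :: nseq t m).
Local Notation beta := (p ++ a.+1 :: nseq t m).

Lemma head_le_pivot : head a p <= a.
Proof.
have lt_p_alpha : size p < size alpha by rewrite size_cat /= addnS ltnS leq_addr.
have [] := alpha_bracelet lt_p_alpha.
rewrite rot_size_cat; case: p => [|x q] //= + _.
by rewrite lex_le_consE => /orP[/ltnW | /andP[/eqP-> _]].
Qed.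

Lemma lex_le_rot_incr_pivot i : nth 0 beta 0 < m -> i < size beta ->
  lex_le beta (rot i beta).
Proof.
move=> head_lt lt_i.
have size_beta : size beta = size alpha by rewrite !size_cat.
case: (posnP i) => [-> | i_gt0]; first by rewrite rot0 lex_le_refl.
case: (leqP i (size p)) => [le_ip | lt_pi].
  have [alpha_le _] := alpha_bracelet (i := i) ltac:(by rewrite -size_beta).
  rewrite -incr_nth_cat; apply/lex_ltW/lex_lt_rot_incr_nth => //.
    by rewrite i_gt0 le_ip.
  by rewrite size_cat /= addnS ltnS leq_addr.
have nth_beta : nth 0 beta i = m.
  rewrite nth_cat ltnNge (ltnW lt_pi) /=.
  case E: (i - size p) => [|j]; first by lia.
  rewrite /= nth_nseq; move: lt_i; rewrite size_cat /= size_nseq.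
  by case: ifP => //; lia.
by rewrite (rot_nth 0) // nth_beta; apply/lex_ltW/lex_lt_head; rewrite // size_cat addnS.
Qed.

Lemma lex_le_rot_rev_incr_pivot i : nth 0 beta 0 < m -> i < size beta ->
  lex_le beta (rot i (rev beta)).
Proof.
move=> head_lt lt_i.
have [_] := alpha_bracelet (i := i) ltac:(by move: lt_i; rewrite !size_cat).
rewrite !rev_cat_cons rev_nseq.
case: (ltngtP i t) => [lt_it | lt_ti | ->] alpha_le.
- rewrite (rot_nth 0) ?size_cat ?size_nseq ?ltn_addr //.
  rewrite nth_cat size_nseq lt_it nth_nseq lt_it.
  by apply/lex_ltW/lex_lt_head; rewrite // size_cat addnS.
- move: alpha_le p_le_m.
  have [u [w [p_eq ->]]] : exists u w, p = u ++ w /\ i = t.+1 + size w.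
    exists (take (size p - (i - t.+1)) p), (drop (size p - (i - t.+1)) p).
    rewrite cat_take_drop size_drop; split => //.
    by move: lt_i; rewrite size_cat /= size_nseq; lia.
  have -> : t.+1 + size w = (size (nseq t m)).+1 + size w by rewrite size_nseq.
  rewrite p_eq !rot_rev_cat_cons -!catA !(lex_le_cat _ _ (esym (size_rev u))).
  rewrite all_cat => + /andP[_ w_le].
  case/orP => [-> // | /andP[-> /= /lex_le_incr_pivot]].
  by rewrite orbC => ->.
- have -> : rot t (nseq t m ++ a.+1 :: rev p) = a.+1 :: rev p ++ nseq t m.
    by rewrite -{1}(size_nseq t m) rot_size_cat.
  have := head_le_pivot; case: p => [|x q] /= x_le.
    exact: lex_le_refl.
  by apply: lex_ltW; rewrite /= ltnS x_le.
Qed.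

End PivotIncrement.

Lemma bracelet_incr_pivot m a t p : all (fun x => x <= m) p -> a < m ->
  bracelet (p ++ a :: nseq t m) -> bracelet (p ++ a.+1 :: nseq t m).
Proof.
move=> p_le a_lt alpha_br.
have [head_lt | ->] : nth 0 (p ++ a.+1 :: nseq t m) 0 < m \/
                      p ++ a.+1 :: nseq t m = nseq t.+1 m.
  have := head_le_pivot alpha_br; case: p {p_le alpha_br} => [|x q] /= x_le.
    by move: a_lt; rewrite leq_eqVlt => /orP[/eqP-> | ->]; [right | left].
  by left; apply: leq_ltn_trans a_lt.
- move=> i lt_i; split.
  + exact: lex_le_rot_incr_pivot.
  + exact: lex_le_rot_rev_incr_pivot.
- exact: bracelet_nseq.
Qed.

Lemma split_last_neq (T : eqType) (x : T) s : s != nseq (size s) x ->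
  exists p a t, s = p ++ a :: nseq t x /\ a != x.
Proof.
elim/last_ind: s => [|s y IH] //.
have rcons_nseq n : rcons (nseq n x) x = nseq n.+1 x by elim: n => //= n ->.
case: (eqVneq y x) => [-> | y_neq] s_neq; last by exists s, y, 0; rewrite cats1.
have [|p [a [t [-> a_neq]]]] := IH.
  by apply: contra s_neq => /eqP {1}->; rewrite size_rcons rcons_nseq.
by exists p, a, t.+1; rewrite rcons_cat rcons_cons rcons_nseq.
Qed.

Lemma LastNonMax_cat k p a t : a != k.-1 ->
  LastNonMax k (p ++ a :: nseq t k.-1) = p ++ a.+1 :: nseq t k.-1.
Proof.
move=> a_neq.
have index_eq : last_nonmax_index k (p ++ a :: nseq t k.-1) = size p.
  rewrite /last_nonmax_index rev_cat_cons rev_nseq find_cat has_nseq /= eqxx andbF.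
  by rewrite a_neq size_nseq addn0 size_cat /= size_nseq addnK.
rewrite /LastNonMax index_eq take_size_cat // nth_cat ltnn subnn /=.
by rewrite size_cat /= size_nseq addnS -addSn addKn.
Qed.

(* The hypothesis [2 <= k] is implied by the others. *)
Theorem mainTheorem4 (k : nat) (alpha : seq nat) :
  2 <= k ->
  is_string k alpha ->
  alpha != nseq (size alpha) k.-1 ->
  bracelet alpha ->
  bracelet (LastNonMax k alpha).
Proof.
move=> _ alpha_string alpha_neq alpha_br.
have [p [a [t [alpha_eq a_neq]]]] := split_last_neq alpha_neq.
have alpha_le : all (fun x => x <= k.-1) alpha.
  by apply: sub_all alpha_string => x /=; lia.
move: alpha_le alpha_br; rewrite alpha_eq LastNonMax_cat // all_cat /=.
case/and3P=> p_le a_le _; apply: bracelet_incr_pivot p_le _.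
by rewrite ltn_neqAle a_neq.
Qed.
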